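(* Let $n>2$ be an even integer, $a\in\mathbb{R}$, $b\in\{1,-1\}$, and for $c\in\mathbb{R}$ let $\lambda_{\min}(c)$, $\lambda_{\max}(c)$ be the smallest and largest eigenvalues of the $(n+1)\times(n+1)$ symmetric matrix $m_n(a,b,c)$ (rows/columns indexed $0,\dots,n$, $(0,0)$-entry $-nc$, $(0,j)$- and $(j,0)$-entries $b$ for $j=1,\dots,n$, lower-right block the circulant $\mathrm{circ}(c,a,0,\dots,0,a)$). Define \[c_{\mathrm{upp}}=-\frac{(n-1)+2a}{n+1},\ \lambda_{\mathrm{upp}}=\frac{2n(a-1)}{n+1},\qquad c_{\mathrm{low}}=\frac{(n-1)-2a}{n+1},\ \lambda_{\mathrm{low}}=\frac{2n(a+1)}{n+1},\] and, for $a\ne0$, $c_{\mathrm{trans}}=\dfrac{8a^2-n}{4(n+1)a}$, $\lambda_{\mathrm{trans}}=-\dfrac{n(8a^2+1)}{4(n+1)a}$. Then $\min_{c\in\mathbb{R}}\lambda_{\max}(c)$ is attained at $(c,\lambda)=(c_{\mathrm{trans}},\lambda_{\mathrm{trans}})$ if $a\le-1/4$ and at $(c_{\mathrm{low}},\lambda_{\mathrm{low}})$ if $a>-1/4$; and $\max_{c\in\mathbb{R}}\lambda_{\min}(c)$ is attained at $(c_{\mathrm{trans}},\lambda_{\mathrm{trans}})$ if $a\ge1/4$ and at $(c_{\mathrm{upp}},\lambda_{\mathrm{upp}})$ if $a<1/4$. Moreover, whenever such an extremum is attained at the transition point $(c_{\mathrm{trans}},\lambda_{\mathrm{trans}})$,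 the corresponding eigenvalue of $m_n(a,b,c_{\mathrm{trans}})$ is double, and otherwise it is single. *)

From HB Require Import structures.
From mathcomp Require Import all_boot all_order all_algebra.
From mathcomp Require Import all_reals.
Set Implicit Arguments. Unset Strict Implicit. Unset Printing Implicit Defensive.
Import Order.TTheory GRing.Theory Num.Theory.
Local Open Scope ring_scope.

Definition mn {R : realType} (n : nat) (a b c : R) : 'M[R]_n.+1 :=
  \matrix_(i, j)
    if (i == 0 :> nat) && (j == 0 :> nat) then - (n%:R * c)
    else if (i == 0 :> nat) || (j == 0 :> nat) then b
    else if i == j then c
    else if (i.+1 == j %[mod n]) || (j.+1 == i %[mod n]) then a
    else 0.

Definition is_lmax {R : realType} (m : nat) (A : 'M[R]_m) (l : R) : Prop :=
  eigenvalue A l /\ forall mu, eigenvalue A mu -> mu <= l.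
Definition is_lmin {R : realType} (m : nat) (A : 'M[R]_m) (l : R) : Prop :=
  eigenvalue A l /\ forall mu, eigenvalue A mu -> l <= mu.

Definition minlmax_at {R : realType} (n : nat) (a b c0 l0 : R) : Prop :=
  is_lmax (mn n a b c0) l0 /\
  forall c l, is_lmax (mn n a b c) l -> l0 <= l.
Definition maxlmin_at {R : realType} (n : nat) (a b c0 l0 : R) : Prop :=
  is_lmin (mn n a b c0) l0 /\
  forall c l, is_lmin (mn n a b c) l -> l <= l0.

Definition eig_mult {R : realType} (m : nat) (A : 'M[R]_m) (l : R) : nat :=
  mup l (char_poly A).

Definition c_upp {R : realType} (n : nat) (a : R) : R := - ((n%:R - 1) + 2 * a) / (n%:R + 1).
Definition l_upp {R : realType} (n : nat) (a : R) : R := 2 * n%:R * (a - 1) / (n%:R + 1).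
Definition c_low {R : realType} (n : nat) (a : R) : R := ((n%:R - 1) - 2 * a) / (n%:R + 1).
Definition l_low {R : realType} (n : nat) (a : R) : R := 2 * n%:R * (a + 1) / (n%:R + 1).
Definition c_trans {R : realType} (n : nat) (a : R) : R :=
  (8 * a ^+ 2 - n%:R) / (4 * (n%:R + 1) * a).
Definition l_trans {R : realType} (n : nat) (a : R) : R :=
  - (n%:R * (8 * a ^+ 2 + 1) / (4 * (n%:R + 1) * a)).

From HB Require Import structures.
From mathcomp Require Import all_boot all_order all_algebra.
From mathcomp Require Import all_reals.
From mathcomp Require Import ring lra zify.
Import Order.TTheory GRing.Theory Num.Theory.
Local Open Scope ring_scope.

(* The vector e_0 and the indicators of the even and of the odd positions of
   the cycle span an invariant subspace of m_n(a,b,c), on which it acts with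
   characteristic polynomial (X - (c - 2a)) q_c(X), where
   q_c(X) = (X + n c)(X - c - 2a) - n b^2.  On the orthogonal complement
   m_n(a,b,c) acts as the circulant block, whose eigenvalues l satisfy
   |l - c| <= 2|a| (Rayleigh quotient) and differ from c - 2a when a <> 0, the
   corresponding eigenvector alternating in sign and hence not orthogonal to
   the even positions.  So lambda_max(c) is the larger of c - 2a and the larger
   root of q_c, and minimising it over c is elementary: for a <= -1/4 the
   minimum is where these two curves cross (c_trans), otherwise it is at
   c_low, where q_c(l_low) = -n (c - c_low)^2 for every c.  The statements on
   lambda_min follow from m_n(-a,-b,-c) = - m_n(a,b,c). *)

Lemma det_mx22 (R : comNzRingType) (A : 'M[R]_2) :
  \det A = A 0 0 * A 1 1 - A 0 1 * A 1 0.
Proof.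
rewrite (expand_det_row _ 0) !big_ord_recl big_ord0 /cofactor !det_mx11 !mxE /=.
rewrite addr0 expr0 expr1 !mul1r mulN1r mulrN.
by congr (_ * _ - _ * _); congr (A _ _); apply/val_inj.
Qed.

Lemma det_mx33 (R : comNzRingType) (A : 'M[R]_3) : \det A =
  A 0 0 * (A 1 1 * A 2 2 - A 1 2 * A 2 1)
  - A 0 1 * (A 1 0 * A 2 2 - A 1 2 * A 2 0)
  + A 0 2 * (A 1 0 * A 2 1 - A 1 1 * A 2 0).
Proof.
rewrite (expand_det_row _ 0) !big_ord_recl big_ord0 /cofactor !det_mx22 !mxE /=.
pose a i j := A (inord i) (inord j).
have aE i j : A i j = a i j by rewrite /a !inord_val.
rewrite !aE /=; ring.
Qed.

Lemma char_poly_trmx (R : comNzRingType) n (A : 'M[R]_n) :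
  char_poly A^T = char_poly A.
Proof.
rewrite /char_poly -det_tr; congr (\det _).
by rewrite /char_poly_mx linearB /= tr_scalar_mx -map_trmx trmxK.
Qed.

Lemma char_poly_lblock (R : comNzRingType) m n (A : 'M[R]_m) (C : 'M[R]_(n, m))
    (B : 'M[R]_n) :
  char_poly (block_mx A 0 C B) = char_poly A * char_poly B.
Proof.
rewrite /char_poly /char_poly_mx map_block_mx map_mx0 scalar_mx_block.
by rewrite opp_block_mx add_block_mx oppr0 addr0 det_lblock.
Qed.

Lemma char_poly_similar (F : fieldType) n (P A B : 'M[F]_n) :
  P \in unitmx -> B *m P = P *m A -> char_poly B = char_poly A.
Proof.
move=> P_unit BP.
pose Pp := map_mx polyC P.
have : char_poly_mx B *m Pp = Pp *m char_poly_mx A.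
  by rewrite /char_poly_mx mulmxBl mulmxBr -scalar_mxC /Pp -!map_mxM BP.
move/(congr1 determinant); rewrite !det_mulmx [_ * \det (char_poly_mx A)]mulrC.
by apply: mulIf; rewrite /Pp det_map_mx polyC_eq0 -unitfE -unitmxE.
Qed.

Lemma root_char_poly_col (F : fieldType) n (A : 'M[F]_n) l :
  root (char_poly A) l -> exists2 z : 'cV_n, z != 0 & A *m z = l *: z.
Proof.
rewrite -char_poly_trmx -eigenvalue_root_char => /eigenvalueP[y yAl y_neq0].
exists y^T; first by rewrite trmx_eq0.
by rewrite -[A]trmxK -trmx_mul yAl linearZ.
Qed.

Lemma char_poly_stable_rows (F : fieldType) m k (M : 'M[F]_(m + k))
    (U : 'M[F]_(m, m + k)) (A : 'M[F]_m) :
  lsubmx U = 1%:M -> U *m M = A *m U ->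
  exists B : 'M[F]_k, char_poly M = char_poly A * char_poly B /\
    forall l, root (char_poly B) l ->
      exists2 u : 'cV_(m + k), u != 0 & U *m u = 0 /\ M *m u = l *: u.
Proof.
move=> U_id UM.
(* Conjugating by P = [U; 0 1] makes M block lower triangular with corner A. *)
pose P : 'M[F]_(m + k) := col_mx U (row_mx 0 1%:M).
have PE : P = block_mx 1%:M (rsubmx U) 0 1%:M by rewrite /P -{1}(hsubmxK U) U_id.
have P_unit : P \in unitmx by rewrite unitmxE PE det_ublock !det1 mulr1 unitr1.
pose D := P *m M *m invmx P.
have UP : U *m invmx P = row_mx 1%:M 0.
  rewrite -[U](col_mxKu U (row_mx 0 1%:M)) mul_usub_mx -/P mulmxV //.
  by rewrite (scalar_mx_block m k) col_mxKu.
have DE : D = block_mx A 0 (dlsubmx D) (drsubmx D).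
  have uD : usubmx D = row_mx A 0.
    rewrite /D -!mul_usub_mx /P col_mxKu UM -!mulmxA UP.
    by rewrite mul_mx_row mulmx1 mulmx0.
  by rewrite -[D in LHS]submxK /ulsubmx /ursubmx uD row_mxKl row_mxKr.
exists (drsubmx D); split.
  rewrite -(@char_poly_similar _ _ P M D) ?mulmxKV // {1}DE.
  exact: char_poly_lblock.
move=> l /root_char_poly_col[z z_neq0 Dz].
exists (invmx P *m col_mx 0 z).
  have : col_mx (0 : 'cV_m) z != 0 by rewrite col_mx_eq0 eqxx.
  by apply: contraNneq => u0; rewrite -(mulKVmx P_unit (col_mx 0 z)) u0 mulmx0.
split; first by rewrite mulmxA UP mul_row_col mul1mx mul0mx addr0.
have MP : M *m invmx P = invmx P *m D by rewrite /D !mulmxA mulVmx // mul1mx.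
rewrite mulmxA MP -mulmxA scalemxAr; congr (_ *m _).
by rewrite {1}DE mul_block_col !mulmx0 mul0mx !add0r Dz scale_col_mx scaler0.
Qed.

Lemma mup_XsubC (F : fieldType) (x y : F) : mup x ('X - y%:P) = (y == x).
Proof. by rewrite -['X - _]expr1 mup_XsubCX; case: (y == x). Qed.

Lemma mup_quadratic (R : realFieldType) (A B K l : R) : 0 < K ->
  (l + A) * (l - B) = K -> mup l (('X + A%:P) * ('X - B%:P) - K%:P) = 1%N.
Proof.
move=> K_gt0 lK.
have -> : ('X + A%:P) * ('X - B%:P) - K%:P = ('X - l%:P) * ('X - (B - A - l)%:P).
  by rewrite -lK !(polyCM, polyCD, polyCB); ring.
rewrite mupM ?polyXsubC_eq0 // !mup_XsubC eqxx.
suff /negPf-> : B - A - l != l by [].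
apply/eqP => root2; move: K_gt0; rewrite -lK.
have -> : l + A = - (l - B) by rewrite -[l in LHS]root2; ring.
by rewrite mulNr oppr_gt0 -expr2 ltNge sqr_ge0.
Qed.

Lemma quad_root_ge (R : rcfType) (A B K L : R) : (L + A) * (L - B) <= K ->
  exists2 mu, (mu + A) * (mu - B) = K & L <= mu.
Proof.
move=> LK.
have D_ge : (2 * L + A - B) ^+ 2 <= (A + B) ^+ 2 + 4 * K.
  rewrite -subr_ge0 (_ : _ - _ = 4 * (K - (L + A) * (L - B))); last by ring.
  by rewrite mulr_ge0 // subr_ge0.
pose s := Num.sqrt ((A + B) ^+ 2 + 4 * K).
have s2 : s ^+ 2 = (A + B) ^+ 2 + 4 * K.
  by rewrite sqr_sqrtr // (le_trans (sqr_ge0 _) D_ge).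
exists ((B - A + s) / 2).
  by rewrite -[K](_ : (s ^+ 2 - (A + B) ^+ 2) / 4 = K); [field | rewrite s2; field].
have : 2 * L + A - B <= s.
  by apply: le_trans (ler_norm _) _; rewrite -sqrtr_sqr; exact: ler_wsqrtr.
by rewrite ler_pdivlMr //; lra.
Qed.

Lemma quad_root_le_root (R : realDomainType) (A B K L mu : R) :
  0 < L + A -> 0 < L - B -> (L + A) * (L - B) = K -> (mu + A) * (mu - B) = K ->
  mu <= L.
Proof.
move=> X_gt0 Y_gt0 LK muK; rewrite leNgt; apply/negP => L_lt_mu.
have : (L + A) * (L - B) < (mu + A) * (mu - B).
  by apply: ltr_pM; rewrite ?ltW // ltrD2r.
by rewrite LK muK ltxx.
Qed.

Section CyclicOrdinals.
Variable n : nat.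
Implicit Types k l : 'I_n.

Lemma val_ordS k : ordS k = (if k.+1 == n then 0 else k.+1)%N :> nat.
Proof.
rewrite /=; case: eqP => [->|kS_neq]; first by rewrite modnn.
by rewrite modn_small //; have := ltn_ord k; lia.
Qed.

Lemma ordS_neq k : (1 < n)%N -> ordS k != k.
Proof.
move=> n_gt1; apply/eqP => /(congr1 (@nat_of_ord n)); rewrite val_ordS.
by have := ltn_ord k; case: eqP; lia.
Qed.

Lemma ordS2_neq k : (2 < n)%N -> ordS (ordS k) != k.
Proof.
move=> n_gt2; apply/eqP => /(congr1 (@nat_of_ord n)); rewrite !val_ordS.
by have := ltn_ord k; case: (k.+1 =P n) => ?; case: eqP => ?; lia.
Qed.

Lemma eq_ordS_pred k l : (l == ordS k) = (k == ord_pred l).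
Proof. by rewrite -{1}(ord_predK l) (inj_eq (@ordS_inj n)) eq_sym. Qed.

Lemma eqn_modSS k l : (k.+2 == l.+1 %[mod n]) = (l == ordS k).
Proof.
rewrite -[k.+2]addn1 -[l.+1]addn1 eqn_modDr (modn_small (ltn_ord l)).
by rewrite -val_eqE /= eq_sym.
Qed.

Hypothesis n_even : ~~ odd n.

Lemma odd_ordS k : odd (ordS k) = ~~ odd k.
Proof.
rewrite val_ordS; case: eqP => [kn|_] //=.
by rewrite -[odd k]negbK -/(odd k.+1) kn (negPf n_even).
Qed.

Lemma odd_ord_pred k : odd (ord_pred k) = ~~ odd k.
Proof. by rewrite -{2}(ord_predK k) odd_ordS negbK. Qed.

End CyclicOrdinals.

Lemma sum_ordS (V : nmodType) n (F : 'I_n -> V) : \sum_k F (ordS k) = \sum_k F k.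
Proof. by rewrite [RHS](reindex_inj (@ordS_inj n)). Qed.

Section ParitySums.
Variables (R : numFieldType) (n : nat).
Hypothesis n_even : ~~ odd n.

Lemma sum_even_odd_ord : \sum_(k < n) ((~~ odd k)%:R : R) = \sum_(k < n) (odd k)%:R.
Proof.
rewrite -(@sum_ordS _ _ (fun k => (odd k)%:R)).
by apply: eq_bigr => k _; rewrite odd_ordS.
Qed.

Lemma sum_odd_ord : \sum_(k < n) ((odd k)%:R : R) = n%:R / 2.
Proof.
have total : \sum_(k < n) ((odd k)%:R : R) + \sum_(k < n) (~~ odd k)%:R = n%:R.
  rewrite -big_split /= (eq_bigr (fun _ => 1)) => [|k _].
    by rewrite sumr_const card_ord.
  by case: (odd k); rewrite ?addr0 ?add0r.
by rewrite -total sum_even_odd_ord; field.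
Qed.

Lemma sum_even_ord : \sum_(k < n) ((~~ odd k)%:R : R) = n%:R / 2.
Proof. by rewrite sum_even_odd_ord sum_odd_ord. Qed.

End ParitySums.

Section CirculantEigenvectors.
Context {R : realFieldType} {n : nat} {v : 'I_n -> R}.

Lemma sum_sqr_cyclic_shift (e : R) : e ^+ 2 = 1 ->
  \sum_k (v k + e * v (ordS k)) ^+ 2 =
  2 * (\sum_k v k ^+ 2 + e * \sum_k v k * v (ordS k)).
Proof.
move=> e2.
have shift : \sum_k v (ordS k) ^+ 2 = \sum_k v k ^+ 2.
  exact: (@sum_ordS _ _ (fun k => v k ^+ 2)).
transitivity (\sum_k v k ^+ 2 + \sum_k v (ordS k) ^+ 2 +
              2 * e * \sum_k v k * v (ordS k)); last by rewrite shift; ring.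
rewrite mulr_sumr -!big_split; apply: eq_bigr => k _ /=.
by rewrite sqrrD exprMn e2 mul1r; ring.
Qed.

Lemma cyclic_autocorr_le : `|\sum_k v k * v (ordS k)| <= \sum_k v k ^+ 2.
Proof.
have shift_ge0 e : e ^+ 2 = 1 ->
    0 <= \sum_k v k ^+ 2 + e * \sum_k v k * v (ordS k).
  move=> e2; rewrite -(pmulr_rge0 _ (ltr0n _ 2)) -sum_sqr_cyclic_shift //.
  by apply: sumr_ge0 => k _; exact: sqr_ge0.
have := shift_ge0 1 (expr1n _ _); have := shift_ge0 (-1) (sqrr_sign _ 1).
by rewrite ler_norml; lra.
Qed.

Lemma cyclic_autocorr_eqN :
  \sum_k v k * v (ordS k) = - \sum_k v k ^+ 2 -> forall k, v (ordS k) = - v k.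
Proof.
move=> autocorrE k.
have : \sum_k (v k + 1 * v (ordS k)) ^+ 2 = 0.
  by rewrite sum_sqr_cyclic_shift ?expr1n // autocorrE mul1r addrN mulr0.
move=> /(psumr_eq0P (fun i _ => sqr_ge0 _)) /(_ k isT) /eqP.
by rewrite mul1r sqrf_eq0 addr_eq0 => /eqP ->; rewrite opprK.
Qed.

Context {a c l : R}.
Hypothesis v_eig : forall k, c * v k + a * (v (ord_pred k) + v (ordS k)) = l * v k.

Lemma circulant_quadratic_form :
  (l - c) * \sum_k v k ^+ 2 = 2 * a * \sum_k v k * v (ordS k).
Proof.
have pred_shift : \sum_k v k * v (ord_pred k) = \sum_k v k * v (ordS k).
  rewrite -(@sum_ordS _ _ (fun k => v k * v (ord_pred k))).
  by apply: eq_bigr => k _; rewrite ordSK mulrC.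
transitivity (\sum_k (a * (v k * v (ord_pred k)) + a * (v k * v (ordS k)))).
  rewrite mulr_sumr; apply: eq_bigr => k _.
  have -> : a * (v k * v (ord_pred k)) + a * (v k * v (ordS k)) =
            v k * (l * v k - c * v k) by rewrite -(v_eig k); ring.
  ring.
by rewrite big_split /= -!mulr_sumr pred_shift; ring.
Qed.

Lemma circulant_eig_band : (exists k, v k != 0) -> `|l - c| <= 2 * `|a|.
Proof.
case=> k vk_neq0.
have V_gt0 : 0 < \sum_k v k ^+ 2.
  rewrite lt_def sumr_ge0 ?andbT => [|i _]; last exact: sqr_ge0.
  apply: contra vk_neq0 => /eqP /(psumr_eq0P (fun i _ => sqr_ge0 (v i))) /(_ k isT).
  by move/eqP; rewrite sqrf_eq0.
rewrite -(ler_pM2r V_gt0) -{1}(gtr0_norm V_gt0) -normrM circulant_quadratic_form.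
rewrite normrM [`|2 * a|]normrM normr_nat.
by apply: ler_wpM2l; [rewrite mulr_ge0 | exact: cyclic_autocorr_le].
Qed.

Lemma circulant_eig_alternating :
  a != 0 -> l = c - 2 * a -> forall k, v (ordS k) = - v k.
Proof.
move=> a_neq0 lE; apply: cyclic_autocorr_eqN.
apply: (mulfI (_ : 2 * a != 0)); first by rewrite mulf_neq0 ?pnatr_eq0.
by rewrite -circulant_quadratic_form lE; ring.
Qed.

End CirculantEigenvectors.

Lemma alternating_eq0 {R : numFieldType} {n} {v : 'I_n -> R} : ~~ odd n ->
  (forall k, v (ordS k) = - v k) -> \sum_(k < n) (~~ odd k)%:R * v k = 0 ->
  forall k, v k = 0.
Proof.
move=> n_even alt even_sum0 k.
have n_gt0 : (0 < n)%N := leq_ltn_trans (leq0n k) (ltn_ord k).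
pose k0 := Ordinal n_gt0.
have signE (i : 'I_n) : v i = (-1) ^+ i * v k0.
  case: i => m; elim: m => [|m IHm] lt_mn /=.
    by rewrite mul1r; congr v; apply: val_inj.
  have -> : Ordinal lt_mn = ordS (Ordinal (ltnW lt_mn)).
    by apply: val_inj; rewrite /= modn_small.
  by rewrite alt IHm exprS mulN1r mulNr.
have : \sum_(k < n) (~~ odd k)%:R * v k = n%:R / 2 * v k0.
  rewrite -sum_even_ord // mulr_suml; apply: eq_bigr => i _.
  by rewrite signE -signr_odd; case: (odd i); rewrite /= ?mul0r ?mul1r.
rewrite even_sum0 => /esym/eqP; rewrite !mulf_eq0 invr_eq0 !pnatr_eq0 gtn_eqF //=.
by move/eqP => v0; rewrite signE v0 mulr0.
Qed.

(* The constraint on an eigenvalue l of m_n(a,b,c) with an eigenvector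
   orthogonal to the parity rows below. *)
Definition circ_range {R : numDomainType} (a c l : R) : Prop :=
  `|l - c| <= 2 * `|a| /\ (a != 0 -> l != c - 2 * a).

(* Rows e_0, then the indicators of the even and of the odd cycle positions:
   index j >= 1 of m_n(a,b,c) is position j - 1 of the cycle. *)
Definition parity_rows {R : nzRingType} n : 'M[R]_(3, n.+1) :=
  \matrix_(i < 3, j < n.+1)
    if i == 0 :> nat then (j == 0 :> nat)%:R
    else if i == 1 :> nat then (odd j)%:R
    else ((j != 0 :> nat) && ~~ odd j)%:R.

Definition mn_parity_block {R : realType} n (a b c : R) : 'M[R]_3 :=
  \matrix_(i < 3, j < 3)
    if i == 0 :> nat then (if j == 0 :> nat then - (n%:R * c) else b)
    else if j == 0 :> nat then n%:R / 2 * b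
    else if i == j :> nat then c else 2 * a.

Definition mn_quad {R : numDomainType} n (a b c : R) : {poly R} :=
  ('X + (n%:R * c)%:P) * ('X - (c + 2 * a)%:P) - (n%:R * b ^+ 2)%:P.

Section Quadratic.
Context {R : numDomainType} (n : nat) (a b : R).

Lemma mn_quadE c x :
  (mn_quad n a b c).[x] = (x + n%:R * c) * (x - (c + 2 * a)) - n%:R * b ^+ 2.
Proof. by rewrite !hornerE. Qed.

Lemma root_mn_quad c x :
  root (mn_quad n a b c) x = ((x + n%:R * c) * (x - (c + 2 * a)) == n%:R * b ^+ 2).
Proof. by rewrite rootE mn_quadE subr_eq0. Qed.

Lemma mn_quad_shift c0 c x : (mn_quad n a b c).[x] =
  (mn_quad n a b c0).[x] + (c - c0) * (n%:R * (x - (c0 + 2 * a)) - (x + n%:R * c0))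
  - n%:R * (c - c0) ^+ 2.
Proof. by rewrite !mn_quadE; ring. Qed.

End Quadratic.

Lemma mn_opp (R : realType) n (a b c : R) : mn n (- a) (- b) (- c) = - mn n a b c.
Proof.
apply/matrixP => i j; rewrite !mxE mulrN.
by do 4 case: ifP => _ //; rewrite oppr0.
Qed.

Lemma mn_sym (R : realType) n (a b c : R) i j : mn n a b c i j = mn n a b c j i.
Proof.
rewrite !mxE; case: (i == 0 :> nat); case: (j == 0 :> nat) => //=.
by rewrite eq_sym orbC.
Qed.

Section MatrixEntries.
Variables (R : realType) (n : nat) (a b c : R).
Local Notation M := (mn n a b c).

Lemma mn_lift0 j : M (lift ord0 j) ord0 = b.
Proof. by rewrite mxE lift0. Qed.

Hypothesis n_gt2 : (2 < n)%N.

Lemma mn_lift k l : M (lift ord0 k) (lift ord0 l) =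
  c * (k == l)%:R + a * (l == ordS k)%:R + a * (k == ordS l)%:R.
Proof.
rewrite mxE !lift0 /= (inj_eq lift_inj) !eqn_modSS.
have [<-|neq_kl] := eqVneq k l.
  by rewrite eq_sym (negPf (@ordS_neq _ k (ltnW n_gt2))) /=; ring.
have [lE|neq_l] := eqVneq l (ordS k).
  by rewrite lE [k == _]eq_sym (negPf (@ordS2_neq _ k n_gt2)) /=; ring.
by case: eqP => _ /=; ring.
Qed.

Lemma mn_lift_sum (x : 'I_n -> R) j :
  \sum_l x l * M (lift ord0 l) (lift ord0 j) =
  c * x j + a * (x (ord_pred j) + x (ordS j)).
Proof.
have delta (F : 'I_n -> R) i : \sum_l F l * (l == i)%:R = F i.
  rewrite (bigD1 i) //= eqxx mulr1 big1 ?addr0 // => l /negPf->; exact: mulr0.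
transitivity (\sum_l (c * x l) * (l == j)%:R + \sum_l (a * x l) * (l == ord_pred j)%:R +
              \sum_l (a * x l) * (l == ordS j)%:R); last by rewrite !delta; ring.
rewrite -!big_split /=; apply: eq_bigr => l _.
by rewrite mn_lift eq_ordS_pred; ring.
Qed.

Hypothesis n_even : ~~ odd n.

Lemma parity_rows_mn :
  parity_rows n *m M = mn_parity_block n a b c *m parity_rows n.
Proof.
apply/matrixP => i j.
have U_lift (i' : 'I_3) (l : 'I_n) : @parity_rows R n i' (lift ord0 l) =
    if i' == 0 :> nat then 0 else if i' == 1 :> nat then (~~ odd l)%:R else (odd l)%:R.
  by rewrite mxE lift0 /= negbK.
have U_0 (i' : 'I_3) : @parity_rows R n i' ord0 = (i' == 0 :> nat)%:R.
  by rewrite mxE /=; case: ifP => //; case: ifP.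
rewrite [LHS]mxE big_ord_recl U_0.
under eq_bigr => l _ do rewrite U_lift.
rewrite [RHS]mxE !big_ord_recl big_ord0 !mxE /=.
case: (unliftP ord0 j) => [j'|] ->; rewrite ?lift0 /=.
  case: i => [[|[|[|i]]] lt_i3] //=.
  - by rewrite big1 => [|l _]; [case: (odd j') => /=; ring | rewrite mul0r].
  - rewrite (mn_lift_sum (fun l => (~~ odd l)%:R)) odd_ordS // odd_ord_pred //.
    by case: (odd j') => /=; ring.
  - rewrite (mn_lift_sum (fun l => (odd l)%:R)) odd_ordS // odd_ord_pred //.
    by case: (odd j') => /=; ring.
under eq_bigr => l _ do rewrite mn_lift0.
rewrite -big_distrl /=; case: i => [[|[|[|i]]] lt_i3] //=.
- by rewrite big1 => [|l _] //; ring.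
- by rewrite sum_even_ord //; ring.
- by rewrite sum_odd_ord //; ring.
Qed.

Lemma char_poly_mn_parity_block :
  char_poly (mn_parity_block n a b c) = ('X - (c - 2 * a)%:P) * mn_quad n a b c.
Proof.
have nE : (n%:R : R) = 2 * (n%:R / 2) by field.
rewrite /char_poly /mn_quad det_mx33 !mxE /= !mulr1n !mulr0n.
set h := n%:R / 2 in nE *; rewrite nE.
by rewrite !(polyCN, polyCM, polyCD, polyCB, polyC_exp, polyC_natr); ring.
Qed.

Lemma mn_eigvec_parity_perp (u : 'cV_n.+1) l : u != 0 ->
  parity_rows n *m u = 0 -> M *m u = l *: u -> circ_range a c l.
Proof.
move=> u_neq0 Uu Mu.
pose v (k : 'I_n) := u (lift ord0 k) 0.
have Uu_row (i : 'I_3) : \sum_j @parity_rows R n i j * u j 0 = 0.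
  by have := congr1 (fun A : 'M_(3, 1) => A i 0) Uu; rewrite !mxE.
have u0 : u ord0 0 = 0.
  have := Uu_row 0; rewrite big_ord_recl mxE mul1r big1 ?addr0 // => k _.
  by rewrite mxE lift0 mul0r.
have even_sum0 : \sum_(k < n) (~~ odd k)%:R * v k = 0.
  have := Uu_row 1; rewrite big_ord_recl mxE mul0r add0r => E; rewrite -[RHS]E.
  by apply: eq_bigr => k _; rewrite mxE lift0.
have v_eig k : c * v k + a * (v (ord_pred k) + v (ordS k)) = l * v k.
  have := congr1 (fun A : 'M_(n.+1, 1) => A (lift ord0 k) 0) Mu.
  rewrite !mxE big_ord_recl u0 mulr0 add0r => <-.
  by rewrite -(mn_lift_sum v); apply: eq_bigr => j _; rewrite mulrC mn_sym.
have [k vk_neq0] : exists k, v k != 0.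
  apply/existsP; apply: contraNT u_neq0 => /existsPn v0.
  apply/eqP/matrixP => i j; rewrite ord1 mxE.
  by case: (unliftP ord0 i) => [k|] ->; [exact/eqP/negPn/v0 | exact: u0].
split; first by apply: (circulant_eig_band v_eig); exists k.
move=> a_neq0; apply/eqP => lE.
have := alternating_eq0 n_even (circulant_eig_alternating v_eig a_neq0 lE) even_sum0 k.
by move/eqP; rewrite (negPf vk_neq0).
Qed.

End MatrixEntries.

Lemma lsubmx_parity_rows (R : nzRingType) k :
  lsubmx (parity_rows k.+2 : 'M[R]_(3, 3 + k)) = 1%:M.
Proof.
apply/matrixP => i j; rewrite !mxE /=.
by case: i => [[|[|[|i]]] ?]; case: j => [[|[|[|j]]] ?].
Qed.

Lemma char_poly_mn {R : realType} {n : nat} (a b c : R) : (2 < n)%N -> ~~ odd n ->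
  exists2 r : {poly R},
    char_poly (mn n a b c) = ('X - (c - 2 * a)%:P) * mn_quad n a b c * r
  & forall l, root r l -> circ_range a c l.
Proof.
case: n => [|[|k]] // n_gt2 n_even.
have [B [charE B_eig]] := @char_poly_stable_rows _ 3 k _ _ _ (lsubmx_parity_rows R k)
  (@parity_rows_mn R k.+2 a b c n_gt2 n_even).
exists (char_poly B); first by rewrite charE char_poly_mn_parity_block.
by move=> l /B_eig[u u_neq0 [Uu Mu]]; exact: mn_eigvec_parity_perp Uu Mu.
Qed.

Section CriticalPoints.
Context {R : realType} (n : nat) (a : R).

Let n1_neq0 : n%:R + 1 != 0 :> R.
Proof. by rewrite natr1 pnatr_eq0. Qed.

Lemma l_trans_c_trans : a != 0 -> l_trans n a = c_trans n a - 2 * a.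
Proof. by move=> a_neq0; rewrite /l_trans /c_trans; field; rewrite a_neq0 n1_neq0. Qed.

Lemma l_trans_c_trans_prod : a != 0 ->
  (l_trans n a + n%:R * c_trans n a) * (l_trans n a - (c_trans n a + 2 * a)) = n%:R.
Proof.
by move=> a_neq0; rewrite l_trans_c_trans // /c_trans; field; rewrite a_neq0 n1_neq0.
Qed.

Lemma l_low_sub_c_low : l_low n a - (c_low n a + 2 * a) = 1.
Proof. by rewrite /l_low /c_low; field. Qed.

Lemma l_low_add_c_low : l_low n a + n%:R * c_low n a = n%:R.
Proof. by rewrite /l_low /c_low; field. Qed.

Lemma l_upp_sub_c_upp : l_upp n a - (c_upp n a + 2 * a) = -1.
Proof. by rewrite /l_upp /c_upp; field. Qed.

Lemma l_upp_add_c_upp : l_upp n a + n%:R * c_upp n a = - n%:R.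
Proof. by rewrite /l_upp /c_upp; field. Qed.

Lemma c_transN : c_trans n (- a) = - c_trans n a.
Proof. by rewrite /c_trans sqrrN mulrN invrN mulrN. Qed.

Lemma l_transN : l_trans n (- a) = - l_trans n a.
Proof. by rewrite /l_trans sqrrN mulrN invrN mulrN. Qed.

Lemma c_lowN : c_low n (- a) = - c_upp n a.
Proof. by rewrite /c_low /c_upp; field. Qed.

Lemma l_lowN : l_low n (- a) = - l_upp n a.
Proof. by rewrite /l_low /l_upp; field. Qed.

End CriticalPoints.

Lemma eigenvalue_oppmx (F : fieldType) m (A : 'M[F]_m) l :
  eigenvalue (- A) (- l) = eigenvalue A l.
Proof.
apply/eigenvalueP/eigenvalueP => -[v vA v_neq0]; exists v => //.
  by apply: oppr_inj; rewrite -mulmxN vA scaleNr.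
by rewrite mulmxN vA scaleNr.
Qed.

Lemma is_lmax_oppmx (R : realType) m (A : 'M[R]_m) l :
  is_lmax (- A) (- l) <-> is_lmin A l.
Proof.
rewrite /is_lmax /is_lmin eigenvalue_oppmx.
split=> -[Al A_ext]; split=> // mu.
  by rewrite -lerN2 -eigenvalue_oppmx => /A_ext.
by rewrite -[mu]opprK eigenvalue_oppmx lerN2 => /A_ext.
Qed.

Lemma maxlmin_at_opp (R : realType) n (a b c0 l0 : R) :
  minlmax_at n (- a) (- b) (- c0) (- l0) -> maxlmin_at n a b c0 l0.
Proof.
rewrite /minlmax_at /maxlmin_at mn_opp is_lmax_oppmx => -[l0_min l0_ext].
split=> // c l l_min; rewrite -lerN2; apply: (l0_ext (- c)).
by rewrite mn_opp is_lmax_oppmx.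
Qed.

Section Spectrum.
Variables (R : realType) (n : nat) (a b : R).
Hypotheses (n_gt2 : (2 < n)%N) (n_even : ~~ odd n) (b2 : b ^+ 2 = 1).

Section FixedDiagonal.
Variable c : R.
Local Notation M := (mn n a b c).

Lemma mn_eigenvalue_c2a : eigenvalue M (c - 2 * a).
Proof.
have [r charE _] := char_poly_mn a b c n_gt2 n_even.
by rewrite eigenvalue_root_char charE !rootM root_XsubC eqxx.
Qed.

Lemma mn_eigenvalue_quad l : root (mn_quad n a b c) l -> eigenvalue M l.
Proof.
have [r charE _] := char_poly_mn a b c n_gt2 n_even.
by rewrite eigenvalue_root_char charE !rootM => ->; rewrite orbT.
Qed.

Lemma mn_eigenvalue_cases l : eigenvalue M l ->
  [\/ l = c - 2 * a, root (mn_quad n a b c) l | circ_range a c l].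
Proof.
have [r charE r_range] := char_poly_mn a b c n_gt2 n_even.
rewrite eigenvalue_root_char charE !rootM root_XsubC.
by case/orP => [/orP[/eqP|]|/r_range]; [constructor 1 | constructor 2 | constructor 3].
Qed.

Lemma mn_eig_mult l : root (mn_quad n a b c) l -> ~ circ_range a c l ->
  eig_mult M l = ((c - 2 * a == l)%R + 1)%N.
Proof.
have [r charE r_range] := char_poly_mn a b c n_gt2 n_even.
move=> ql l_out.
have : char_poly M != 0 := monic_neq0 (char_poly_monic M).
rewrite /eig_mult charE !mulf_eq0 !negb_or => /andP[/andP[_ q_neq0] r_neq0].
rewrite !mupM ?mulf_neq0 ?polyXsubC_eq0 // mup_XsubC.
rewrite (mupNroot (introN idP (fun rl => l_out (r_range l rl)))) addn0.
congr (_ + _)%N; apply: mup_quadratic; last by move: ql; rewrite root_mn_quad => /eqP.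
by rewrite b2 mulr1 ltr0n (ltn_trans _ n_gt2).
Qed.

Lemma mn_lmax_ge L l : L <= c - 2 * a \/ (mn_quad n a b c).[L] <= 0 ->
  is_lmax M l -> L <= l.
Proof.
move=> L_low [_ l_max]; case: L_low => [L_le | qL_le0].
  exact: le_trans L_le (l_max _ mn_eigenvalue_c2a).
have [|mu muE L_le_mu] := @quad_root_ge _ (n%:R * c) (c + 2 * a) (n%:R * b ^+ 2) L.
  by rewrite -subr_le0 -mn_quadE.
apply: (le_trans L_le_mu); apply/l_max/mn_eigenvalue_quad.
by rewrite root_mn_quad muE.
Qed.

Lemma mn_is_lmax L : root (mn_quad n a b c) L ->
  0 < L + n%:R * c -> 0 < L - (c + 2 * a) -> c - 2 * a <= L -> is_lmax M L.
Proof.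
move=> qL X_gt0 Y_gt0 c2a_le; split; first exact: mn_eigenvalue_quad.
move: (qL); rewrite root_mn_quad => /eqP LK.
move=> mu /mn_eigenvalue_cases[-> // | | [band _]].
  by rewrite root_mn_quad => /eqP; exact: quad_root_le_root X_gt0 Y_gt0 LK.
have : 2 * `|a| <= L - c.
  by case: (lerP 0 a) => a0; [rewrite ger0_norm | rewrite ltr0_norm]; lra.
by move: band; rewrite ler_norml; lra.
Qed.

Lemma mn_eig_mult_simple L : root (mn_quad n a b c) L -> 2 * `|a| < `|L - c| ->
  eig_mult M L = 1%N.
Proof.
move=> qL far; rewrite mn_eig_mult //; last by case; rewrite leNgt far.
suff /negPf-> : c - 2 * a != L by [].
apply: contraTneq far => <-.
by rewrite (_ : _ - c = - (2 * a)) ?normrN ?normrM ?normr_nat ?ltxx //; ring.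
Qed.

Lemma mn_eig_mult_double : a != 0 -> root (mn_quad n a b c) (c - 2 * a) ->
  eig_mult M (c - 2 * a) = 2%N.
Proof.
by move=> a_neq0 q; rewrite mn_eig_mult ?eqxx //; case=> _ /(_ a_neq0); rewrite eqxx.
Qed.

End FixedDiagonal.

Lemma mn_minlmax_at c0 L : root (mn_quad n a b c0) L ->
  0 < L + n%:R * c0 -> 0 < L - (c0 + 2 * a) -> c0 - 2 * a <= L ->
  (forall c, L <= c - 2 * a \/ (mn_quad n a b c).[L] <= 0) -> minlmax_at n a b c0 L.
Proof.
move=> qL X_gt0 Y_gt0 c2a_le L_low; split; first exact: mn_is_lmax.
by move=> c l; apply: mn_lmax_ge.
Qed.

Let n_gt0 : 0 < n%:R :> R.
Proof. by rewrite ltr0n (ltn_trans _ n_gt2). Qed.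

Lemma root_mn_quad_trans : a != 0 -> root (mn_quad n a b (c_trans n a)) (l_trans n a).
Proof. by move=> a_neq0; rewrite root_mn_quad b2 mulr1 l_trans_c_trans_prod. Qed.

Lemma root_mn_quad_low : root (mn_quad n a b (c_low n a)) (l_low n a).
Proof. by rewrite root_mn_quad b2 l_low_add_c_low l_low_sub_c_low !mulr1. Qed.

Lemma root_mn_quad_upp : root (mn_quad n a b (c_upp n a)) (l_upp n a).
Proof. by rewrite root_mn_quad b2 l_upp_add_c_upp l_upp_sub_c_upp mulrNN !mulr1. Qed.

Lemma minlmax_at_trans : a <= - (1 / 4) ->
  minlmax_at n a b (c_trans n a) (l_trans n a).
Proof.
move=> a_le.
have a_neq0 : a != 0 by rewrite lt_eqF //; lra.
have qL := root_mn_quad_trans a_neq0; have LE := l_trans_c_trans n a a_neq0.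
set c0 := c_trans n a in qL LE *; set L := l_trans n a in qL LE *.
set X := L + n%:R * c0; set Y := L - (c0 + 2 * a).
have Y_ge1 : 1 <= Y by rewrite /Y LE; lra.
have XY : X * Y = n%:R by move: qL; rewrite root_mn_quad b2 mulr1 => /eqP.
have X_gt0 : 0 < X by rewrite -(pmulr_lgt0 _ (lt_le_trans ltr01 Y_ge1)) XY.
apply: mn_minlmax_at => //; [lra | by rewrite LE |].
(* As a function of c, q_c(L) is a concave quadratic vanishing at c0, with
   slope n Y - X = X (Y^2 - 1) >= 0 there. *)
move=> c; have [c0_le | c_lt] := lerP c0 c; [left; rewrite LE; lra | right].
rewrite (mn_quad_shift n a b c0) (rootP qL) add0r -/X -/Y.
have -> : n%:R * Y - X = X * (Y ^+ 2 - 1) by rewrite -XY; ring.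
rewrite subr_le0 (le_trans _ (mulr_ge0 (ltW n_gt0) (sqr_ge0 (c - c0)))) //.
apply: mulr_le0_ge0; first lra.
by apply: mulr_ge0; [exact: ltW | rewrite subr_ge0 exprn_ege1].
Qed.

Lemma minlmax_at_low : - (1 / 4) < a ->
  minlmax_at n a b (c_low n a) (l_low n a).
Proof.
move=> a_gt.
have := l_low_sub_c_low n a; have := l_low_add_c_low n a => LX LY.
apply: mn_minlmax_at; [exact: root_mn_quad_low | by rewrite LX | by rewrite LY | lra |].
move=> c; right; rewrite (mn_quad_shift n a b (c_low n a)) (rootP root_mn_quad_low).
rewrite LX LY mulr1 subrr mulr0 add0r subr_le0.
by apply: mulr_ge0; [exact: ltW | exact: sqr_ge0].
Qed.

Lemma eig_mult_trans : a != 0 ->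
  eig_mult (mn n a b (c_trans n a)) (l_trans n a) = 2%N.
Proof.
move=> a_neq0; rewrite l_trans_c_trans //; apply: mn_eig_mult_double => //.
by rewrite -l_trans_c_trans // root_mn_quad_trans.
Qed.

Lemma eig_mult_low : - (1 / 4) < a ->
  eig_mult (mn n a b (c_low n a)) (l_low n a) = 1%N.
Proof.
move=> a_gt; apply: mn_eig_mult_simple; first exact: root_mn_quad_low.
have := l_low_sub_c_low n a => LY.
rewrite ltr_normr; apply/orP; left.
by case: (lerP 0 a) => a0; [rewrite ger0_norm | rewrite ltr0_norm]; lra.
Qed.

Lemma eig_mult_upp : a < 1 / 4 ->
  eig_mult (mn n a b (c_upp n a)) (l_upp n a) = 1%N.
Proof.
move=> a_lt; apply: mn_eig_mult_simple; first exact: root_mn_quad_upp.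
have := l_upp_sub_c_upp n a => LY.
rewrite ltr_normr; apply/orP; right.
by case: (lerP 0 a) => a0; [rewrite ger0_norm | rewrite ltr0_norm]; lra.
Qed.

End Spectrum.

Theorem corollary5 (R : realType) (n : nat) (a b : R) :
  (2 < n)%N -> ~~ odd n -> (b = 1 \/ b = -1) ->
  (* min over c of lambda_max *)
  (a <= - (1 / 4) ->
     minlmax_at n a b (c_trans n a) (l_trans n a) /\
     eig_mult (mn n a b (c_trans n a)) (l_trans n a) = 2%N) /\
  (- (1 / 4) < a ->
     minlmax_at n a b (c_low n a) (l_low n a) /\
     eig_mult (mn n a b (c_low n a)) (l_low n a) = 1%N) /\
  (* max over c of lambda_min *)
  (1 / 4 <= a ->
     maxlmin_at n a b (c_trans n a) (l_trans n a) /\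
     eig_mult (mn n a b (c_trans n a)) (l_trans n a) = 2%N) /\
  (a < 1 / 4 ->
     maxlmin_at n a b (c_upp n a) (l_upp n a) /\
     eig_mult (mn n a b (c_upp n a)) (l_upp n a) = 1%N).
Proof.
move=> n_gt2 n_even b_sign.
have b2 : b ^+ 2 = 1 by case: b_sign => ->; rewrite ?sqrrN expr1n.
have b2N : (- b) ^+ 2 = 1 by rewrite sqrrN.
split; [|split; [|split]] => a_range.
- split; first exact: minlmax_at_trans.
  by apply: eig_mult_trans; rewrite // lt_eqF //; lra.
- by split; [exact: minlmax_at_low | exact: eig_mult_low].
- split; last by apply: eig_mult_trans; rewrite // gt_eqF //; lra.
  apply: maxlmin_at_opp; rewrite -c_transN -l_transN.
  by apply: minlmax_at_trans; rewrite // lerNr opprK.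
- split; last exact: eig_mult_upp.
  apply: maxlmin_at_opp; rewrite -c_lowN -l_lowN.
  by apply: minlmax_at_low; rewrite // ltrNl opprK.
Qed.
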